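(* Model (LP) (defined in the context) is equivalent to model (MIP): the optimal objective values of (LP) and (MIP) coincide, and every optimal solution $(\lambda^*,\mathbf{s}^{-*},\mathbf{s}^{+*},\delta^*,\boldsymbol{\alpha}^*,\gamma^* )$ of (LP) satisfies $\gamma^*=1$ and $\alpha^*_j\in\{0,1\}$ for all $j$, so that it is an optimal solution of (MIP).
   Context: Data envelopment analysis setting. There are $n$ decision making units (DMUs) indexed by $J=\{1,\dots,n\}$, each using $m$ inputs to produce $s$ outputs; DMU$_j$ has input vector $\mathbf{x}_j=(x_{1j},\dots,x_{mj})^T\in\mathbb{R}^m_+$ and output vector $\mathbf{y}_j=(y_{1j},\dots,y_{sj})^T\in\mathbb{R}^s_+$; $\mathbf{X}=[\mathbf{x}_1\cdots\mathbf{x}_n]$, $\mathbf{Y}=[\mathbf{y}_1\cdots\mathbf{y}_n]$. Define $\mathbf{R}^-=(R^-_1,\dots,R^-_m)^T$, $\mathbf{R}^+=(R^+_1,\dots,R^+_s)^T$ by $1/R^-_i=\max_{j}x_{ij}-\min_j x_{ij}$ and $1/R^+_r=\max_j y_{rj}-\min_j y_{rj}$. For $o\in J$, the RAM model is: $\rho_o=\min\, 1-\frac{1}{m+s}(\mathbf{R}^{-T}\mathbf{s}^-+\mathbf{R}^{+T}\mathbf{s}^+)$ subject to $\mathbf{X}\lambda+\mathbf{s}^-=\mathbf{x}_o$, $\mathbf{Y}\lambda-\mathbf{s}^+=\mathbf{y}_o$, $\mathbf{1}^T\lambda=1$, $\lambda\ge 0,\mathbf{s}^-\ge0,\mathbf{s}^+\ge0$.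 A DMU is RAM-efficient if its optimal value $\rho$ equals $1$; let $E\subseteq J$ be the index set of RAM-efficient DMUs and $\mathbf{X}_E,\mathbf{Y}_E$ the submatrices of $\mathbf{X},\mathbf{Y}$ with columns in $E$. Fix the evaluated DMU $o\in J$. Model (MIP): maximize $\mathbf{1}^T\boldsymbol{\alpha}+\gamma$ over $\lambda\in\mathbb{R}^{|E|}$, $\mathbf{s}^-\in\mathbb{R}^m$, $\mathbf{s}^+\in\mathbb{R}^s$, $\delta\in\mathbb{R}$, $\boldsymbol{\alpha}\in\{0,1\}^{|E|}$, $\gamma\in\{0,1\}$ subject to $\mathbf{X}_E\lambda+\mathbf{s}^--\mathbf{x}_o\delta=\mathbf{0}$, $\mathbf{Y}_E\lambda-\mathbf{s}^+-\mathbf{y}_o\delta=\mathbf{0}$, $\mathbf{1}^T\lambda-\delta=0$, $\mathbf{R}^{-T}\mathbf{s}^-+\mathbf{R}^{+T}\mathbf{s}^+-(m+s)(1-\rho_o)\delta=0$, $\boldsymbol{\alpha}\le\lambda$, $\gamma\le\delta$, $\lambda\ge\mathbf{0}$, $\mathbf{s}^-\ge\mathbf{0}$, $\mathbf{s}^+\ge\mathbf{0}$, $\delta\ge0$. Model (LP): the same as (MIP) except that the binary requirements are replaced by $\mathbf{0}\le\boldsymbol{\alpha}\le\mathbf{1}$ (with $\boldsymbol{\alpha}\in\mathbb{R}^{|E|}$) and $0\le\gamma\le1$ (with $\gamma\in\mathbb{R}$). *)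

From mathcomp Require Import all_boot all_order all_algebra.
Set Implicit Arguments. Unset Strict Implicit. Unset Printing Implicit Defensive.
Import Order.TTheory GRing.Theory Num.Theory.
Local Open Scope ring_scope.

Section DEA.
Variables (R : realFieldType) (m s n : nat).
Variables (X : 'I_m -> 'I_n -> R) (Y : 'I_s -> 'I_n -> R).

(* max_j x_ij and min_j x_ij, computed as big max/min over all DMUs
   seeded with the value of some DMU j0 (so they are the true max/min). *)
Definition rowmax (Z : 'I_n -> R) (j0 : 'I_n) := \big[Num.max/Z j0]_j Z j.
Definition rowmin (Z : 'I_n -> R) (j0 : 'I_n) := \big[Num.min/Z j0]_j Z j.

Definition Rminus (j0 : 'I_n) (i : 'I_m) : R :=
  1 / (rowmax (X i) j0 - rowmin (X i) j0).
Definition Rplus (j0 : 'I_n) (r : 'I_s) : R :=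
  1 / (rowmax (Y r) j0 - rowmin (Y r) j0).

Definition RAM_feasible (o : 'I_n) (lam : 'I_n -> R) (sm : 'I_m -> R)
    (sp : 'I_s -> R) : Prop :=
  (forall i, \sum_j X i j * lam j + sm i = X i o) /\
  (forall r, \sum_j Y r j * lam j - sp r = Y r o) /\
  \sum_j lam j = 1 /\
  (forall j, 0 <= lam j) /\
  (forall i, 0 <= sm i) /\
  (forall r, 0 <= sp r).

Definition wslack (j0 : 'I_n) (sm : 'I_m -> R) (sp : 'I_s -> R) : R :=
  \sum_i Rminus j0 i * sm i + \sum_r Rplus j0 r * sp r.

Definition RAM_obj (j0 : 'I_n) sm sp : R :=
  1 - wslack j0 sm sp / (m + s)%:R.

Definition RAM_opt_value (o : 'I_n) (v : R) : Prop :=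
  (exists lam sm sp, RAM_feasible o lam sm sp /\ RAM_obj o sm sp = v) /\
  (forall lam sm sp, RAM_feasible o lam sm sp -> v <= RAM_obj o sm sp).

(* A candidate solution (lambda, s^-, s^+, delta, alpha, gamma) of (LP)/(MIP).
   lambda and alpha are indexed by all DMUs, but only the components
   with index in E are variables of the models (the others never occur). *)
Record sol := Sol {
  lam : 'I_n -> R; sm : 'I_m -> R; sp : 'I_s -> R;
  del : R; al : 'I_n -> R; ga : R }.

Variables (E : {set 'I_n}) (o : 'I_n) (rho_o : R).

Definition common_feasible (z : sol) : Prop :=
  (forall i, \sum_(j in E) X i j * lam z j + sm z i - X i o * del z = 0) /\
  (forall r, \sum_(j in E) Y r j * lam z j - sp z r - Y r o * del z = 0) /\
  \sum_(j in E) lam z j - del z = 0 /\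
  wslack o (sm z) (sp z) - (m + s)%:R * (1 - rho_o) * del z = 0 /\
  (forall j, j \in E -> al z j <= lam z j) /\
  ga z <= del z /\
  (forall j, j \in E -> 0 <= lam z j) /\
  (forall i, 0 <= sm z i) /\
  (forall r, 0 <= sp z r) /\
  0 <= del z.

Definition MIP_feasible (z : sol) : Prop :=
  [/\ common_feasible z,
      (forall j, j \in E -> al z j = 0 \/ al z j = 1) &
      (ga z = 0 \/ ga z = 1)].

Definition LP_feasible (z : sol) : Prop :=
  [/\ common_feasible z,
      (forall j, j \in E -> 0 <= al z j <= 1) &
      0 <= ga z <= 1].

Definition obj (z : sol) : R := \sum_(j in E) al z j + ga z.

Definition optimal (feas : sol -> Prop) (z : sol) : Prop :=
  feas z /\ forall z', feas z' -> obj z' <= obj z.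

Definition opt_value (feas : sol -> Prop) (v : R) : Prop :=
  (exists z, feas z /\ obj z = v) /\ forall z, feas z -> obj z <= v.

End DEA.

From mathcomp Require Import all_boot all_order all_algebra.
From mathcomp Require Import ring lra.
From Stdlib Require Import Classical.
Import Order.TTheory GRing.Theory Num.Theory.
Local Open Scope ring_scope.
Set Implicit Arguments. Unset Strict Implicit.

(* The feasible set of the constraints shared by (LP) and (MIP) is a convex
   cone. Adding to a feasible point with delta >= 1, for each j in E that is
   positive in some feasible point, a multiple of that point, gives one point w
   with lambda_j >= 1 for all such j. Rounding alpha_j to [lambda_j >= 1] and
   setting gamma = 1 yields a (MIP)-feasible point dominating every
   (LP)-feasible point coordinatewise, because alpha_j <= lambda_j forces
   alpha_j <= 0 whenever lambda_j can never be positive. The RAM optimum of the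
   evaluated DMU provides the initial point with delta = 1: its lambda is
   supported on E, since substituting an inefficient DMU by its RAM projection
   strictly decreases the RAM objective. *)

Lemma rowmax_seed (R : realFieldType) n (Z : 'I_n -> R) j0 j1 :
  rowmax Z j0 = rowmax Z j1.
Proof. by apply/le_anti/andP; split; apply: bigmax_le => // *; apply: le_bigmax. Qed.

Lemma rowmin_seed (R : realFieldType) n (Z : 'I_n -> R) j0 j1 :
  rowmin Z j0 = rowmin Z j1.
Proof. by apply/le_anti/andP; split; apply: le_bigmin => // *; apply: bigmin_le. Qed.

Lemma sum_mulrDr (R : comRingType) (I : finType) (P : pred I) (F G H : I -> R) c :
  \sum_(j | P j) F j * (G j + c * H j) =
  \sum_(j | P j) F j * G j + c * \sum_(j | P j) F j * H j.
Proof. by rewrite mulr_sumr -big_split /=; apply: eq_bigr => j _; ring. Qed.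

Lemma sum_mul_delta (R : ringType) n (F : 'I_n -> R) j :
  \sum_k F k * (k == j)%:R = F j.
Proof.
by rewrite (bigD1 j) //= eqxx mulr1 big1 ?addr0 // => k /negbTE ->; rewrite mulr0.
Qed.

Lemma sumD_le_eq (R : numDomainType) (I : finType) (P : pred I) (F G : I -> R) a b :
  (forall i, P i -> F i <= G i) -> a <= b ->
  \sum_(i | P i) F i + a = \sum_(i | P i) G i + b ->
  (forall i, P i -> F i = G i) /\ a = b.
Proof.
move=> FG ab /esym /eqP; rewrite -subr_eq0 opprD addrACA -sumrB.
have GF0 : 0 <= \sum_(i | P i) (G i - F i) by apply: sumr_ge0 => i Pi; rewrite subr_ge0 FG.
rewrite paddr_eq0 ?subr_ge0 // => /andP [/eqP sum0]; rewrite subr_eq0 => /eqP ->.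
split=> // i Pi; apply/eqP; rewrite eq_sym -subr_eq0; apply/eqP.
by apply: (psumr_eq0P _ sum0) => // k Pk; rewrite subr_ge0 FG.
Qed.

Lemma sum_in_support (R : nmodType) (I : finType) (E : {set I}) (F : I -> R) :
  (forall j, j \notin E -> F j = 0) -> \sum_(j in E) F j = \sum_j F j.
Proof.
move=> F0; rewrite big_mkcond; apply: eq_bigr => j _.
by case: ifPn => // /F0 ->.
Qed.

Section RAM.
Variables (R : realFieldType) (m s n : nat).
Variables (X : 'I_m -> 'I_n -> R) (Y : 'I_s -> 'I_n -> R).

Lemma wslack_seed j0 j1 sm sp : wslack X Y j0 sm sp = wslack X Y j1 sm sp.
Proof.
by rewrite /wslack /Rminus /Rplus; congr (_ + _); apply: eq_bigr => i _;
  rewrite (rowmax_seed _ j0 j1) (rowmin_seed _ j0 j1).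
Qed.

Lemma wslack_comb j sm1 sp1 sm2 sp2 c :
  wslack X Y j (fun i => sm1 i + c * sm2 i) (fun r => sp1 r + c * sp2 r) =
  wslack X Y j sm1 sp1 + c * wslack X Y j sm2 sp2.
Proof. by rewrite /wslack !sum_mulrDr; ring. Qed.

(* For [m + s = 0] both sides vanish, the right one because [x / 0 = 0]. *)
Lemma wslack_RAM_obj j sm sp :
  wslack X Y j sm sp = (m + s)%:R * (1 - RAM_obj X Y j sm sp).
Proof.
rewrite /RAM_obj opprB addrC subrK.
have [ms0 | ms_neq0] := eqVneq (m + s)%N 0%N.
  move: ms0 => /eqP; rewrite addn_eq0 => /andP [/eqP m0 /eqP s0].
  rewrite /wslack !big1 ?addr0 ?mul0r ?mulr0 // => i _; exfalso; move: (ltn_ord i).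
    by rewrite [X in (_ < X)%N]s0.
  by rewrite [X in (_ < X)%N]m0.
by rewrite mulrC divfK // pnatr_eq0.
Qed.

Lemma RAM_obj_comb o j sm0 sp0 tm tp c :
  RAM_obj X Y o (fun i => sm0 i + c * tm i) (fun r => sp0 r + c * tp r) =
  RAM_obj X Y o sm0 sp0 - c * (1 - RAM_obj X Y j tm tp).
Proof. by rewrite /RAM_obj wslack_comb (wslack_seed o j tm tp); ring. Qed.

Lemma RAM_obj_le1 j sm sp :
  (forall i, rowmin (X i) j < rowmax (X i) j) ->
  (forall r, rowmin (Y r) j < rowmax (Y r) j) ->
  (forall i, 0 <= sm i) -> (forall r, 0 <= sp r) -> RAM_obj X Y j sm sp <= 1.
Proof.
move=> HRm HRp sm0 sp0; rewrite /RAM_obj gerBl divr_ge0 // /wslack /Rminus /Rplus.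
by apply: addr_ge0; apply: sumr_ge0 => i _;
  rewrite mulr_ge0 // div1r invr_ge0 subr_ge0 ltW.
Qed.

Lemma RAM_feasible_substitute o j l sm sp mu tm tp :
  RAM_feasible X Y o l sm sp -> RAM_feasible X Y j mu tm tp ->
  RAM_feasible X Y o (fun k => l k + l j * (mu k - (k == j)%:R))
    (fun i => sm i + l j * tm i) (fun r => sp r + l j * tp r).
Proof.
move=> [Xl [Yl [l1 [l0 [sm0 sp0]]]]] [Xmu [Ymu [mu1 [mu0 [tm0 tp0]]]]].
have lj0 := l0 j.
have sum_sub (F : 'I_n -> R) :
    \sum_k F k * (l k + l j * (mu k - (k == j)%:R)) =
    \sum_k F k * l k + l j * (\sum_k F k * mu k - F j).
  rewrite sum_mulrDr -(sum_mul_delta F j) -sumrB.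
  by congr (_ + _ * _); apply: eq_bigr => k _; rewrite mulrBr.
split; [by move=> i; rewrite sum_sub; have := Xl i; have := Xmu i; nra|].
split; [by move=> r; rewrite sum_sub; have := Yl r; have := Ymu r; nra|].
split.
  rewrite big_split /= -mulr_sumr sumrB l1 mu1 (eq_bigr (fun k => 1 * (k == j)%:R)).
    by rewrite sum_mul_delta subrr mulr0 addr0.
  by move=> k _; rewrite mul1r.
split.
  move=> k /=; case: (eqVneq k j) => [-> | _].
    by rewrite mulrBr mulr1 addrC subrK mulr_ge0.
  by rewrite subr0 addr_ge0 ?mulr_ge0.
by split => [i | r]; rewrite addr_ge0 ?mulr_ge0.
Qed.

Section Efficient_support.
Variables (rho : 'I_n -> R) (o : 'I_n).
Hypothesis Hrho : forall j, RAM_opt_value X Y j (rho j).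
Hypothesis HRm : forall i, rowmin (X i) o < rowmax (X i) o.
Hypothesis HRp : forall r, rowmin (Y r) o < rowmax (Y r) o.

Lemma RAM_opt_value_le1 j : rho j <= 1.
Proof.
have [[mu [tm [tp [[_ [_ [_ [_ [tm0 tp0]]]]] <-]]]] _] := Hrho j.
apply: RAM_obj_le1 => // [i | r]; rewrite -?(rowmin_seed _ o) -?(rowmax_seed _ o).
  exact: HRm.
exact: HRp.
Qed.

(* Substituting DMU j by its RAM projection lowers the objective by
   [l j * (1 - rho j)]. *)
Lemma RAM_optimum_supported l sm sp :
  RAM_feasible X Y o l sm sp -> RAM_obj X Y o sm sp = rho o ->
  forall j, l j != 0 -> rho j = 1.
Proof.
move=> Fl Ol j lj_neq0.
have [[mu [tm [tp [Fmu Omu]]]] _] := Hrho j.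
have lj_gt0 : 0 < l j by case: Fl => _ [_ [_ [l0 _]]]; rewrite lt_def lj_neq0 l0.
have := (Hrho o).2 _ _ _ (RAM_feasible_substitute Fl Fmu).
rewrite (RAM_obj_comb _ j) Ol Omu => opt.
have := RAM_opt_value_le1 j; nra.
Qed.

Lemma RAM_optimum_common_feasible :
  exists z, common_feasible X Y [set j | rho j == 1] o (rho o) z /\ del z = 1.
Proof.
have [[l [sm [sp [Fl Ol]]]] _] := Hrho o.
have supp j : j \notin [set j | rho j == 1] -> l j = 0.
  by rewrite inE; apply: contraNeq => /(RAM_optimum_supported Fl Ol) ->.
case: Fl => [Xl [Yl [l1 [l0 [sm0 sp0]]]]].
exists (Sol l sm sp 1 (fun=> 0) 0); split => //=.
split.
  move=> i; rewrite (sum_in_support (F := fun j => X i j * l j)) ?Xl ?mulr1 ?subrr //.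
  by move=> j /supp ->; rewrite mulr0.
split.
  move=> r; rewrite (sum_in_support (F := fun j => Y r j * l j)) ?Yl ?mulr1 ?subrr //.
  by move=> j /supp ->; rewrite mulr0.
split; first by rewrite (sum_in_support supp) l1 subrr.
split; first by rewrite wslack_RAM_obj Ol mulr1 subrr.
by do !split => // j _; apply: l0.
Qed.

End Efficient_support.
End RAM.

Section Cone.
Variables (R : realFieldType) (m s n : nat).
Variables (X : 'I_m -> 'I_n -> R) (Y : 'I_s -> 'I_n -> R).
Variables (E : {set 'I_n}) (o : 'I_n) (rho_o : R).

Local Notation feasible := (common_feasible X Y E o rho_o).
Local Notation LP := (LP_feasible X Y E o rho_o).
Local Notation MIP := (MIP_feasible X Y E o rho_o).

Lemma feasible_lam_ge0 z j : feasible z -> j \in E -> 0 <= lam z j.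
Proof. by case=> _ [_ [_ [_ [_ [_ [lam0 _]]]]]]; apply: lam0. Qed.

Lemma feasible_del_ge0 z : feasible z -> 0 <= del z.
Proof. by case=> _ [_ [_ [_ [_ [_ [_ [_ [_ del0]]]]]]]]. Qed.

Lemma feasible_al_le_lam z j : feasible z -> j \in E -> al z j <= lam z j.
Proof. by case=> _ [_ [_ [_ [al_le _]]]]; apply: al_le. Qed.

(* The binary variables are reset to [0], which keeps [alpha <= lambda] and
   [gamma <= delta]. *)
Definition comb (z w : sol R m s n) (c : R) : sol R m s n :=
  Sol (fun k => lam z k + c * lam w k) (fun i => sm z i + c * sm w i)
      (fun r => sp z r + c * sp w r) (del z + c * del w) (fun=> 0) 0.

Lemma feasible_comb z w c :
  0 <= c -> feasible z -> feasible w -> feasible (comb z w c).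
Proof.
move=> c0 [Xz [Yz [lz [wz [_ [_ [lz0 [smz [spz dz]]]]]]]]]
  [Xw [Yw [lw [ww [_ [_ [lw0 [smw [spw dw]]]]]]]]]; rewrite /comb /common_feasible /=.
split; [by move=> i; rewrite sum_mulrDr; have := Xz i; have := Xw i; nra|].
split; [by move=> r; rewrite sum_mulrDr; have := Yz r; have := Yw r; nra|].
split; [by rewrite big_split /= -mulr_sumr; nra|].
split; [by rewrite wslack_comb; nra|].
split; [by move=> j jE; have := lz0 j jE; have := lw0 j jE; nra|].
split; [nra|].
split; [by move=> j jE; have := lz0 j jE; have := lw0 j jE; nra|].
split; [by move=> i; have := smz i; have := smw i; nra|].
split; [by move=> r; have := spz r; have := spw r; nra|].
nra.
Qed.

Definition active j := exists z, feasible z /\ 0 < lam z j.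

Lemma exists_feasible_active_ge1 z0 (r : seq 'I_n) :
  feasible z0 -> 1 <= del z0 ->
  exists w, [/\ feasible w, 1 <= del w &
    forall j, j \in r -> j \in E -> active j -> 1 <= lam w j].
Proof.
move=> F0 D0; elim: r => [|j r [w [Fw Dw Aw]]]; first by exists z0; split.
have [[jE [z [Fz lzj]]] | not_active] :=
  classic (j \in E /\ active j); last first.
  exists w; split => // k; rewrite in_cons => /orP [/eqP -> | kr] kE Ak //.
    by exfalso; apply: not_active.
  exact: Aw.
have c0 : 0 <= (lam z j)^-1 by rewrite invr_ge0 ltW.
exists (comb w z (lam z j)^-1); split; first exact: feasible_comb.
  by have := mulr_ge0 c0 (feasible_del_ge0 Fz); rewrite /=; lra.
move=> k; rewrite in_cons => /orP [/eqP -> | kr] kE Ak /=.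
  by rewrite mulVf ?gt_eqF // lerDr feasible_lam_ge0.
by rewrite -[1]addr0 lerD ?Aw ?mulr_ge0 ?feasible_lam_ge0.
Qed.

Definition round (w : sol R m s n) : sol R m s n :=
  Sol (lam w) (sm w) (sp w) (del w) (fun j => if 1 <= lam w j then 1 else 0) 1.

Lemma MIP_feasible_round w : feasible w -> 1 <= del w -> MIP (round w).
Proof.
move=> [Xw [Yw [lw [ww [_ [_ rest]]]]]] Dw; split; last by right.
  do 4!split => //; split => [j jE /= | //].
  by case: ifP => // _; apply: rest.1.
by move=> j _ /=; case: ifP; [right | left].
Qed.

Lemma LP_feasible_MIP z : MIP z -> LP z.
Proof.
case=> Fz al01 ga01; split => // [j jE|].
  by case: (al01 j jE) => ->; rewrite ?lexx ?ler01.
by case: ga01 => ->; rewrite ?lexx ?ler01.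
Qed.

Section Dominance.
Variable w : sol R m s n.
Hypothesis active_ge1 : forall j, j \in E -> active j -> 1 <= lam w j.

(* An inactive [j] has [lambda_j <= 0], hence [alpha_j <= 0], in every
   feasible point. *)
Lemma LP_al_le_round z j : LP z -> j \in E -> al z j <= al (round w) j.
Proof.
case=> Fz al01 _ jE /=; case: ifP => [_ | lwj]; first by case/andP: (al01 j jE).
apply: (le_trans (feasible_al_le_lam Fz jE)); rewrite leNgt; apply/negP => lzj.
by move: lwj; rewrite active_ge1 //; exists z.
Qed.

Lemma LP_obj_le_round z : LP z -> obj E z <= obj E (round w).
Proof.
move=> LPz; rewrite /obj lerD //; last by case: LPz => _ _ /andP [].
by apply: ler_sum => j jE; apply: LP_al_le_round.
Qed.

Hypotheses (Fw : feasible w) (Dw : 1 <= del w).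

Lemma LP_MIP_equiv_of_dominant :
  (exists v, opt_value E LP v /\ opt_value E MIP v) /\
  (forall z, optimal E LP z ->
     [/\ ga z = 1, (forall j, j \in E -> al z j = 0 \/ al z j = 1) &
         optimal E MIP z]).
Proof.
have MIPw := MIP_feasible_round Fw Dw; have LPw := LP_feasible_MIP MIPw.
split.
  exists (obj E (round w)); split; split; try by exists (round w).
    exact: LP_obj_le_round.
  by move=> z /LP_feasible_MIP /LP_obj_le_round.
move=> z [LPz opt].
have [al_eq ga1] : (forall j, j \in E -> al z j = al (round w) j) /\ ga z = 1.
  apply: sumD_le_eq => [j jE | |]; first exact: LP_al_le_round.
    by case: LPz => _ _ /andP [].
  by apply/le_anti; rewrite LP_obj_le_round // opt.
have al01 j : j \in E -> al z j = 0 \/ al z j = 1.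
  by move=> jE; rewrite al_eq //=; case: ifP; [right | left].
have MIPz : MIP z by case: LPz => Fz _ _; split => //; right.
by split => //; split => // z' /LP_feasible_MIP /opt.
Qed.

End Dominance.

End Cone.

Unset Implicit Arguments.
Theorem theorem2 (R : realFieldType) (m s n : nat)
    (X : 'I_m -> 'I_n -> R) (Y : 'I_s -> 'I_n -> R)
    (HX : forall i j, 0 <= X i j) (HY : forall r j, 0 <= Y r j)
    (o : 'I_n)
    (HRm : forall i, rowmin (X i) o < rowmax (X i) o)
    (HRp : forall r, rowmin (Y r) o < rowmax (Y r) o)
    (rho : 'I_n -> R) (Hrho : forall j, RAM_opt_value X Y j (rho j)) :
  let E := [set j | rho j == 1] in
  (exists v, opt_value E (LP_feasible X Y E o (rho o)) v /\
             opt_value E (MIP_feasible X Y E o (rho o)) v) /\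
  (forall z, optimal E (LP_feasible X Y E o (rho o)) z ->
     [/\ ga z = 1,
         (forall j, j \in E -> al z j = 0 \/ al z j = 1) &
         optimal E (MIP_feasible X Y E o (rho o)) z]).
Proof.
have [z0 [F0 D0]] := RAM_optimum_common_feasible Hrho HRm HRp.
have := exists_feasible_active_ge1 (enum 'I_n) F0.
rewrite D0 lexx => /(_ isT) [w [Fw Dw active_ge1]].
by apply: (LP_MIP_equiv_of_dominant (w := w)) => // j; apply: active_ge1; rewrite mem_enum.
Qed.
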